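(* In the setting described in the context, $\mathcal{V}(X)<\infty$ for every $X\in\mathcal{K}(\mathbb{R}^n)$ with $X\cap\mathcal{D}_{\mathcal{A}}\neq\emptyset$.
   Context: Let $\|\cdot\|$ be a norm on $\mathbb{R}^n$ and $\mathrm{dist}(x,\Omega):=\inf_{y\in\Omega}\|x-y\|$. Let $\mathcal{K}(\mathbb{R}^n)$ denote the nonempty compact subsets of $\mathbb{R}^n$. Consider $x_{k+1}=f(x_k,u_k)$ with $f:\mathbb{R}^n\times\mathbb{R}^m\to\mathbb{R}^n$ continuous and inputs $u_k\in U$, $U\subset\mathbb{R}^m$ nonempty compact. For $x\in\mathbb{R}^n$ and $\pi:\mathbb{Z}_+\to U$, $\varphi_x^\pi(0)=x$, $\varphi_x^\pi(k+1)=f(\varphi_x^\pi(k),\pi(k))$; $\mathcal{R}(X,k):=\{\varphi_x^\pi(k):x\in X,\pi\in U^{\mathbb{Z}_+}\}$. Let $\mathcal{A}\in\mathcal{K}(\mathbb{R}^n)$ be controlled invariant. Assume local $\ell_p$-stabilizability: there exist $r>0$, $M\ge1$, $p>0$, $\lambda:[0,r]\times\mathbb{Z}_+\to\mathbb{R}_+$ such that (1) for each $k$, $s\mapsto\lambda(s,k)$ is continuous, nondecreasing, $\lambda(0,k)=0$; for each $s$, $k\mapsto\lambda(s,k)$ is nonincreasing, $\lambda(s,0)\le s$; (2) $\sum_{k}\lambda(r,k)^p<\infty$; (3) for every $x$ with $\mathrm{dist}(x,\mathcal{A})\le r$ there is $\pi\in U^{\mathbb{Z}_+}$ with $\mathrm{dist}(\varphi_x^\pi(k),\mathcal{A})\le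 M\lambda(\mathrm{dist}(x,\mathcal{A}),k)$ for all $k$. Let $\mathcal{D}_{\mathcal{A}}:=\{x:\exists\pi\in U^{\mathbb{Z}_+},\ \lim_{k\to\infty}\mathrm{dist}(\varphi_x^\pi(k),\mathcal{A})=0\}$. Let $\alpha:\mathbb{R}^n\to\mathbb{R}_+$ be continuous with $\underline{\alpha}\,\mathrm{dist}(x,\mathcal{A})^{\bar p}\le\alpha(x)\le\overline{\alpha}\,\mathrm{dist}(x,\mathcal{A})^{\bar p}$, constants $\underline{\alpha},\overline{\alpha}>0$, $\bar p\ge p$. Define $\Psi(X):=\inf_{y\in X}\alpha(y)$ and $\mathcal{V}(X):=\sum_{k=0}^\infty\Psi(\mathcal{R}(X,k))\in[0,\infty]$. *)

From HB Require Import structures.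
From mathcomp Require Import all_boot all_order all_algebra.
From mathcomp Require Import all_classical all_reals all_analysis.
Set Implicit Arguments. Unset Strict Implicit. Unset Printing Implicit Defensive.
Import Order.TTheory GRing.Theory Num.Theory.
Import numFieldNormedType.Exports.
Local Open Scope classical_set_scope.
Local Open Scope ring_scope.

Section Defs.
Variable R : realType.

Definition is_norm (n : nat) (nrm : 'rV[R]_n -> R) : Prop :=
  [/\ (forall x, nrm x = 0 -> x = 0),
      (forall (a : R) x, nrm (a *: x) = `|a| * nrm x) &
      (forall x y, nrm (x + y) <= nrm x + nrm y)].

Definition dist (n : nat) (nrm : 'rV[R]_n -> R) (x : 'rV[R]_n)
  (Om : set 'rV[R]_n) : R :=
  inf [set nrm (x - y) | y in Om].

Fixpoint traj (n m : nat) (f : 'rV[R]_n -> 'rV[R]_m -> 'rV[R]_n)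
  (x : 'rV[R]_n) (pi : nat -> 'rV[R]_m) (k : nat) : 'rV[R]_n :=
  match k with
  | 0%N => x
  | k'.+1 => f (traj f x pi k') (pi k')
  end.

Definition admissible (m : nat) (U : set 'rV[R]_m) (pi : nat -> 'rV[R]_m) :=
  forall k, U (pi k).

Definition reach (n m : nat) (f : 'rV[R]_n -> 'rV[R]_m -> 'rV[R]_n)
  (U : set 'rV[R]_m) (X : set 'rV[R]_n) (k : nat) : set 'rV[R]_n :=
  [set z | exists x, exists pi, [/\ X x, admissible U pi & z = traj f x pi k]].

Definition controlled_invariant (n m : nat)
  (f : 'rV[R]_n -> 'rV[R]_m -> 'rV[R]_n) (U : set 'rV[R]_m)
  (A : set 'rV[R]_n) : Prop :=
  forall x, A x -> exists u, U u /\ A (f x u).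

Definition attr_domain (n m : nat) (nrm : 'rV[R]_n -> R)
  (f : 'rV[R]_n -> 'rV[R]_m -> 'rV[R]_n) (U : set 'rV[R]_m)
  (A : set 'rV[R]_n) : set 'rV[R]_n :=
  [set x | exists pi, admissible U pi /\
     (fun k => dist nrm (traj f x pi k) A) @ \oo --> (0 : R)].

Definition lp_stabilizable (n m : nat) (nrm : 'rV[R]_n -> R)
  (f : 'rV[R]_n -> 'rV[R]_m -> 'rV[R]_n) (U : set 'rV[R]_m)
  (A : set 'rV[R]_n) (r M p : R) (lam : R -> nat -> R) : Prop :=
  0 < r /\ 1 <= M /\ 0 < p /\
      (forall s k, 0 <= s <= r -> 0 <= lam s k) /\
      (forall k, {within `[0, r], continuous (fun s => lam s k)}) /\
      (forall k s t, 0 <= s -> s <= t -> t <= r -> lam s k <= lam t k) /\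
      (forall k, lam 0 k = 0) /\
      (forall s k l, 0 <= s <= r -> (k <= l)%N -> lam s l <= lam s k) /\
      (forall s, 0 <= s <= r -> lam s 0%N <= s) /\
      ((\sum_(0 <= k <oo) ((lam r k `^ p)%:E)) < +oo)%E /\
      (forall x, dist nrm x A <= r ->
         exists pi, admissible U pi /\
           forall k, dist nrm (traj f x pi k) A <= M * lam (dist nrm x A) k).

Definition Psi (n : nat) (alpha : 'rV[R]_n -> R) (X : set 'rV[R]_n) : R :=
  inf [set alpha y | y in X].

Definition Vfun (n m : nat) (f : 'rV[R]_n -> 'rV[R]_m -> 'rV[R]_n)
  (U : set 'rV[R]_m) (alpha : 'rV[R]_n -> R) (X : set 'rV[R]_n) : \bar R :=
  (\sum_(0 <= k <oo) (Psi alpha (reach f U X k))%:E)%E.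

End Defs.

From HB Require Import structures.
From mathcomp Require Import all_boot all_order all_algebra.
From mathcomp Require Import all_classical all_reals all_analysis.
Set Implicit Arguments. Unset Strict Implicit. Unset Printing Implicit Defensive.
Import Order.TTheory GRing.Theory Num.Theory.
Import numFieldNormedType.Exports.
Local Open Scope classical_set_scope.
Local Open Scope ring_scope.

(* A point x0 of X in the domain of attraction is steered, along some input,
   into the r-neighbourhood of A at a time K; switching there to a
   stabilizing input gives a trajectory from X with
   dist(phi(K + i), A) <= M lam(r, i).  Hence
   Psi(R(X, K + i)) <= alpha(phi(K + i))
                    <= ahi M^pbar r^(pbar - p) lam(r, i)^p,
   so the tail of the series defining V(X) is dominated by a multiple of the
   convergent series sum_k lam(r, k)^p, and only finitely many terms remain. *)

Section Norm.
Variables (R : realType) (n : nat) (nrm : 'rV[R]_n -> R).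
Hypothesis nrm_norm : is_norm nrm.

Lemma nrm_ge0 x : 0 <= nrm x.
Proof.
case: nrm_norm => _ nrmZ nrmD.
have nrm0 : nrm 0 = 0 by rewrite -(scale0r (0 : 'rV[R]_n)) nrmZ normr0 mul0r.
have nrmN : nrm (- x) = nrm x by rewrite -scaleN1r nrmZ normrN normr1 mul1r.
have := nrmD x (- x); rewrite subrr nrm0 nrmN => h.
by rewrite -(@pmulr_rge0 _ 2) // mulr2n mulrDl !mul1r.
Qed.

Lemma dist_ge0 x (A : set 'rV[R]_n) : A !=set0 -> 0 <= dist nrm x A.
Proof.
move=> [a Aa]; apply: lb_le_inf; first by exists (nrm (x - a)), a.
by move=> _ [y _ <-]; exact: nrm_ge0.
Qed.

End Norm.

Section Trajectories.
Variables (R : realType) (n m : nat) (f : 'rV[R]_n -> 'rV[R]_m -> 'rV[R]_n).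

Lemma eq_traj x (pi pi' : nat -> 'rV[R]_m) K :
  (forall j, (j < K)%N -> pi j = pi' j) -> traj f x pi K = traj f x pi' K.
Proof.
elim: K => [//|K IH] eq_pi /=.
by rewrite IH ?eq_pi // => j /ltnW; exact: eq_pi.
Qed.

Lemma traj_addn x pi K k :
  traj f x pi (k + K) = traj f (traj f x pi K) (fun j => pi (j + K)%N) k.
Proof. by elim: k => [//|k IH]; rewrite addSn /= IH. Qed.

Definition concat_input (K : nat) (pi0 pi1 : nat -> 'rV[R]_m) (j : nat) :=
  if (j < K)%N then pi0 j else pi1 (j - K)%N.

Lemma admissible_concat (U : set 'rV[R]_m) K pi0 pi1 :
  admissible U pi0 -> admissible U pi1 ->
  admissible U (concat_input K pi0 pi1).
Proof. by move=> U0 U1 j; rewrite /concat_input; case: ifP. Qed.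

Lemma traj_concat x K pi0 pi1 i :
  traj f x (concat_input K pi0 pi1) (i + K) = traj f (traj f x pi0 K) pi1 i.
Proof.
rewrite traj_addn.
have -> : traj f x (concat_input K pi0 pi1) K = traj f x pi0 K.
  by apply: eq_traj => j jK; rewrite /concat_input jK.
congr traj; apply: funext => j.
by rewrite /concat_input ltnNge leq_addl addnK.
Qed.

End Trajectories.

Section Infimum.
Variables (R : realType) (n : nat) (alpha : 'rV[R]_n -> R).
Hypothesis alpha_ge0 : forall x, 0 <= alpha x.

Lemma Psi_ge0 X : 0 <= Psi alpha X.
Proof.
have [[x Xx]|/nonemptyPn ->] := pselect (X !=set0); last first.
  by rewrite /Psi image_set0 inf0.
apply: lb_le_inf; first by exists (alpha x), x.
by move=> _ [y _ <-].
Qed.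

Lemma Psi_le X x : X x -> Psi alpha X <= alpha x.
Proof.
by move=> Xx; apply: ge_inf; [exists 0 => _ [y _ <-] | exists x].
Qed.

End Infimum.

Lemma powR_le_mul_powR (R : realType) (x r p q : R) :
  0 <= x <= r -> 0 < p <= q -> x `^ q <= r `^ (q - p) * x `^ p.
Proof.
move=> /andP[x0 xr] /andP[p0 pq].
have -> : x `^ q = x `^ (q - p) * x `^ p.
  rewrite -powRD ?subrK //; apply/implyP => /eqP q0.
  by move: (lt_le_trans p0 pq); rewrite q0 ltxx.
apply: ler_wpM2r; first exact: powR_ge0.
by apply: ge0_ler_powR; rewrite ?subr_ge0 // nnegrE (le_trans x0 xr).
Qed.

Lemma nneseries_tail_le_lty (R : realType) (u v : nat -> R) (C : R) K :
  (forall k, 0 <= u k) -> (forall i, 0 <= v i) -> 0 <= C ->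
  (forall i, u (i + K)%N <= C * v i) ->
  (\sum_(0 <= k <oo) (v k)%:E < +oo)%E ->
  (\sum_(0 <= k <oo) (u k)%:E < +oo)%E.
Proof.
move=> u0 v0 C0 uv v_fin.
rewrite (@nneseries_split _ _ 0 K); last by move=> k _; rewrite lee_fin.
rewrite add0n -nneseries_addn; last by move=> k; rewrite lee_fin.
apply: lte_add_pinfty; first by rewrite sumEFin ltry.
apply: (@le_lt_trans _ _ (\sum_(0 <= i <oo) (C%:E * (v i)%:E))%E).
  apply: lee_nneseries => [k _ _|k _]; first by rewrite lee_fin.
  by rewrite -EFinM lee_fin.
by rewrite nneseriesZl ?lte_mul_pinfty // => k _; rewrite lee_fin.
Qed.

Section Stabilization.
Variables (R : realType) (n m : nat) (nrm : 'rV[R]_n -> R).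
Variables (f : 'rV[R]_n -> 'rV[R]_m -> 'rV[R]_n) (U : set 'rV[R]_m).
Variables (A : set 'rV[R]_n) (r M p : R) (lam : R -> nat -> R).
Hypotheses (nrm_norm : is_norm nrm) (A0 : A !=set0).
Hypothesis stab : lp_stabilizable nrm f U A r M p lam.

Lemma lam_r_bound i : 0 <= lam r i <= r.
Proof.
case: stab => r0 [_ [_ [lam0 [_ [_ [_ [lam_nonincr [lam_s _]]]]]]]].
have r_range : 0 <= r <= r by rewrite lexx ltW.
rewrite lam0 //=.
exact: le_trans (lam_nonincr _ _ _ r_range (leq0n i)) (lam_s _ r_range).
Qed.

Lemma attr_domain_stabilized x : attr_domain nrm f U A x ->
  exists K pi, admissible U pi /\
    forall i, dist nrm (traj f x pi (i + K)) A <= M * lam r i.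
Proof.
case: stab => r0 [M1 [_ [_ [_ [lam_homo [_ [_ [_ [_ stabilize]]]]]]]]].
move=> [pi0 [U_pi0 /cvgrPdist_le /(_ r r0) [K _ near_A]]].
have yK : dist nrm (traj f x pi0 K) A <= r.
  by move: (near_A K (leqnn K)); rewrite /= sub0r normrN; exact/le_trans/ler_norm.
have [pi1 [U_pi1 decay]] := stabilize _ yK.
exists K, (concat_input K pi0 pi1); split; first exact: admissible_concat.
move=> i; rewrite traj_concat; apply: le_trans (decay i) _.
apply: ler_wpM2l; first exact: le_trans M1.
by apply: lam_homo => //; exact: dist_ge0.
Qed.

Lemma powR_dist_le z i (pbar : R) : p <= pbar ->
  dist nrm z A <= M * lam r i ->
  dist nrm z A `^ pbar <= M `^ pbar * r `^ (pbar - p) * lam r i `^ p.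
Proof.
case: stab => _ [M1 [p0 _]] ppbar zi.
have M0 : 0 <= M := le_trans ler01 M1.
have /andP[lam0 _] := lam_r_bound i.
apply: (@le_trans _ _ ((M * lam r i) `^ pbar)).
  by apply: ge0_ler_powR; rewrite ?nnegrE ?mulr_ge0 ?dist_ge0 //;
    exact: le_trans (ltW p0) ppbar.
by rewrite powRM // -mulrA ler_wpM2l ?powR_le_mul_powR ?powR_ge0 ?p0 ?lam_r_bound.
Qed.

End Stabilization.

Theorem lemma5 (R : realType) (n m : nat) (nrm : 'rV[R]_n -> R)
  (f : 'rV[R]_n -> 'rV[R]_m -> 'rV[R]_n) (U : set 'rV[R]_m)
  (A : set 'rV[R]_n) (r M p : R) (lam : R -> nat -> R)
  (alpha : 'rV[R]_n -> R) (alo ahi pbar : R) :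
  is_norm nrm ->
  continuous (fun xu : 'rV[R]_n * 'rV[R]_m => f xu.1 xu.2) ->
  compact U -> U !=set0 ->
  compact A -> A !=set0 ->
  controlled_invariant f U A ->
  lp_stabilizable nrm f U A r M p lam ->
  continuous alpha ->
  (forall x, 0 <= alpha x) ->
  0 < alo -> 0 < ahi -> p <= pbar ->
  (forall x, alo * dist nrm x A `^ pbar <= alpha x /\
             alpha x <= ahi * dist nrm x A `^ pbar) ->
  forall X : set 'rV[R]_n, compact X -> X !=set0 ->
  X `&` attr_domain nrm f U A !=set0 ->
  (Vfun f U alpha X < +oo)%E.
Proof.
move=> nrm_norm _ _ _ _ A0 _ stab _ alpha0 _ ahi0 ppbar alpha_bounds X _ _.
move=> [x [Xx /(attr_domain_stabilized nrm_norm A0 stab) [K [pi [U_pi tail]]]]].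
have [_ [_ [_ [_ [_ [_ [_ [_ [_ [lam_sum _]]]]]]]]]] := stab.
apply: (@nneseries_tail_le_lty _ (fun k => Psi alpha (reach f U X k))
  (fun k => lam r k `^ p) (ahi * (M `^ pbar * r `^ (pbar - p))) K).
- by move=> k; apply: Psi_ge0.
- by move=> i; exact: powR_ge0.
- by rewrite !mulr_ge0 ?powR_ge0 ?ltW.
- move=> i; have reach_z : reach f U X (i + K) (traj f x pi (i + K)).
    by exists x, pi.
  apply: le_trans (Psi_le alpha0 reach_z) _.
  apply: le_trans (proj2 (alpha_bounds _)) _.
  rewrite -mulrA; apply: ler_wpM2l; first exact: ltW.
  exact (powR_dist_le nrm_norm A0 stab ppbar (tail i)).
- exact: lam_sum.
Qed.
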